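(* Let $N\ge2$ and $r\ge1$ be integers, let $\mathbf z=(z_1,\dots,z_r)\in\mathbb C^r$ with $|z_i|\le1$ for all $i$ and $z_1\ne0$, and let $(s_1,\dots,s_r)\in U_r$. Then for $r=1$, $$\Big(1-\frac1{z_1}\Big)\mathrm{Li}^\star_{(z_1)}(s_1-1)_{\ge N}+\frac{z_1^{N-1}}{N^{s_1-1}}=\sum_{k\ge0}(-1)^k\frac{(s_1-1)_{k+1}}{(k+1)!}\mathrm{Li}^\star_{(z_1)}(s_1+k)_{\ge N},$$ and for $r>1$, $$\Big(1-\frac1{z_1}\Big)\mathrm{Li}^\star_{\mathbf z}(s_1-1,s_2,\dots,s_r)_{\ge N}+\frac1{z_1}\mathrm{Li}^\star_{(z_1z_2,z_3,\dots,z_r)}(s_1+s_2-1,s_3,\dots,s_r)_{\ge N}=\sum_{k\ge0}(-1)^k\frac{(s_1-1)_{k+1}}{(k+1)!}\mathrm{Li}^\star_{\mathbf z}(s_1+k,s_2,\dots,s_r)_{\ge N}.$$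
   Context: $U_r:=\{(s_1,\dots,s_r)\in\mathbb C^r:\Re(s_1+\cdots+s_i)>i\text{ for all }1\le i\le r\}$. For $|w_i|\le1$, the tail of the multiple polylogarithm-star function is $\mathrm{Li}^\star_{(w_1,\dots,w_d)}(s_1,\dots,s_d)_{\ge N}:=\sum_{n_1\ge n_2\ge\cdots\ge n_d\ge N}\frac{w_1^{n_1}\cdots w_d^{n_d}}{n_1^{s_1}\cdots n_d^{s_d}}$. The first term on the left-hand side is taken to be $0$ when $z_1=1$; when $z_1\ne1$ the series defining $\mathrm{Li}^\star_{\mathbf z}(s_1-1,s_2,\dots,s_r)_{\ge N}$ converges. $(s)_k=s(s+1)\cdots(s+k-1)$ is the Pochhammer symbol. *)

From Stdlib Require Import Reals List Arith.
From Coquelicot Require Import Coquelicot.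
Import ListNotations.
Open Scope R_scope.

(* x^s := exp(s * ln x) for a real x > 0 and complex s *)
Definition cpow_pos (x : R) (s : C) : C :=
  (exp (Re s * ln x) * cos (Im s * ln x), exp (Re s * ln x) * sin (Im s * ln x)).

Definition CSeries (a : nat -> C) : C :=
  (Series (fun n => Re (a n)), Series (fun n => Im (a n))).

(* The list is given in REVERSED order
   [(w_d,s_d); ...; (w_1,s_1)]; nested_tail l m =
   sum_{n_d >= m} w_d^{n_d}/n_d^{s_d} sum_{n_{d-1} >= n_d} ... sum_{n_1 >= n_2} w_1^{n_1}/n_1^{s_1}. *)
Fixpoint nested_tail (l : list (C * C)) (m : nat) : C :=
  match l with
  | [] => RtoC 1
  | (w, s) :: rest =>
      CSeries (fun j => Cmult (Cdiv (Cpow w (m + j)) (cpow_pos (INR (m + j)) s))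
                              (nested_tail rest (m + j)))
  end.

(* Li^star_{(w_1..w_d)}(s_1..s_d)_{>= N}
   = sum_{n_1 >= n_2 >= ... >= n_d >= N} w_1^{n_1}...w_d^{n_d}/(n_1^{s_1}...n_d^{s_d}) *)
Definition LiStar_tail (ws ss : list C) (N : nat) : C :=
  nested_tail (rev (combine ws ss)) N.

Fixpoint poch (s : C) (k : nat) : C :=
  match k with
  | O => RtoC 1
  | S k' => Cmult (poch s k') (Cplus s (RtoC (INR k')))
  end.

Definition Csum_list (l : list nat) (f : nat -> C) : C :=
  fold_right (fun i acc => Cplus (f i) acc) (RtoC 0) l.

(* U_r, with s indexed 1..r *)
Definition in_U (r : nat) (s : nat -> C) : Prop :=
  forall i : nat, (1 <= i <= r)%nat -> Re (Csum_list (seq 1 i) s) > INR i.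

From Stdlib Require Import Reals List Arith Lia Lra.
From Coquelicot Require Import Coquelicot.
Import ListNotations.
Open Scope R_scope.

(* For x > 1 the binomial series gives
     x^(1-s) - (x+1)^(1-s) = sum_(k>=0) (-1)^k (s-1)_(k+1) / (k+1)! * x^(-s-k).
   Multiply by z_1^(n_1), put x = n_1 and sum over n_1 >= n_2: the left side telescopes to
     (1 - 1/z_1) sum_(n_1>=n_2) z_1^(n_1) n_1^(1-s_1) + z_1^(n_2-1) n_2^(1-s_1),
   and the last term merges with the n_2-summation into a layer with parameters z_1 z_2 and
   s_1 + s_2 - 1.  Summing over the outer indices gives the proposition, once the k-sum has
   been interchanged with every n-sum.  This is justified by absolute convergence: since
   n >= N >= 2 the k-th term carries a factor 2^(-k), and a layer whose summands are
   O(n^(-sigma)) with sigma > 1 has tails O(m^(1-sigma)); the inequalities defining U_r are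
   exactly what keeps sigma > 1 in every layer.
   The binomial series with a complex exponent a is proved by showing that its partial sums
   times (1+t)^(-a) tend to 1, by a mean value estimate. *)

(** * Complex powers *)

Lemma C_ext (x y : C) : Re x = Re y -> Im x = Im y -> x = y.
Proof. destruct x, y; simpl; intros; subst; auto. Qed.

Definition Cexp (w : C) : C := (exp (Re w) * cos (Im w), exp (Re w) * sin (Im w)).

Lemma Cexp_add a b : Cexp (Cplus a b) = Cmult (Cexp a) (Cexp b).
Proof.
  destruct a as [a1 a2], b as [b1 b2]; unfold Cexp; apply C_ext; simpl;
    rewrite exp_plus, ?cos_plus, ?sin_plus; ring.
Qed.

Lemma Cexp_0 : Cexp (RtoC 0) = RtoC 1.
Proof. unfold Cexp; apply C_ext; simpl; rewrite exp_0, ?cos_0, ?sin_0; ring. Qed.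

Lemma Cmod_Cexp w : Cmod (Cexp w) = exp (Re w).
Proof.
  unfold Cmod, Cexp, Re, Im; cbn [fst snd].
  pose proof (sin2_cos2 (snd w)) as E. unfold Rsqr in E.
  replace ((exp (fst w) * cos (snd w)) ^ 2 + (exp (fst w) * sin (snd w)) ^ 2)
    with (exp (fst w) ^ 2 * (sin (snd w) * sin (snd w) + cos (snd w) * cos (snd w))) by ring.
  rewrite E, Rmult_1_r. apply sqrt_pow2. left; apply exp_pos.
Qed.

Lemma cpow_pos_Cexp x s : cpow_pos x s = Cexp (Cmult s (RtoC (ln x))).
Proof.
  replace (Cmult s (RtoC (ln x))) with ((Re s * ln x, Im s * ln x) : C)
    by (destruct s; apply C_ext; simpl; ring).
  reflexivity.
Qed.

Lemma cpow_pos_add x a b : cpow_pos x (Cplus a b) = Cmult (cpow_pos x a) (cpow_pos x b).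
Proof. rewrite !cpow_pos_Cexp, <- Cexp_add. f_equal. ring. Qed.

Lemma cpow_pos_mult_distr x y a : 0 < x -> 0 < y ->
  cpow_pos (x * y) a = Cmult (cpow_pos x a) (cpow_pos y a).
Proof.
  intros. rewrite !cpow_pos_Cexp, <- Cexp_add, ln_mult, RtoC_plus by auto. f_equal. ring.
Qed.

Lemma cpow_pos_0 x : cpow_pos x (RtoC 0) = RtoC 1.
Proof. rewrite cpow_pos_Cexp, <- Cexp_0. f_equal. ring. Qed.

Lemma cpow_pos_opp_mul x a : Cmult (cpow_pos x (Copp a)) (cpow_pos x a) = RtoC 1.
Proof. rewrite <- cpow_pos_add, <- (cpow_pos_0 x). f_equal. ring. Qed.

Lemma Cmod_cpow_pos x a : Cmod (cpow_pos x a) = Rpower x (Re a).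
Proof. rewrite cpow_pos_Cexp, Cmod_Cexp. destruct a; simpl; unfold Rpower; f_equal; ring. Qed.

Lemma cpow_pos_neq_0 x a : cpow_pos x a <> RtoC 0.
Proof.
  intro H. apply (f_equal Cmod) in H. rewrite Cmod_cpow_pos, Cmod_0 in H.
  unfold Rpower in H. pose proof (exp_pos (Re a * ln x)). lra.
Qed.

Lemma cpow_pos_INR x j : 0 < x -> cpow_pos x (RtoC (INR j)) = RtoC (x ^ j).
Proof.
  intros. rewrite <- (Rpower_pow j x) by auto. unfold cpow_pos, Rpower.
  apply C_ext; simpl; rewrite Rmult_0_l, ?cos_0, ?sin_0; ring.
Qed.

Lemma Cdiv_cpow_pos u x a : Cdiv u (cpow_pos x a) = Cmult u (cpow_pos x (Copp a)).
Proof.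
  pose proof (cpow_pos_opp_mul x a). pose proof (cpow_pos_neq_0 x a).
  unfold Cdiv. f_equal. rewrite <- (Cmult_1_l (Cinv _)), <- H. field. auto.
Qed.

(** * Complex series and limits *)

Lemma im_le_Cmod c : Rabs (Im c) <= Cmod c.
Proof.
  destruct c as [x y]; unfold Cmod, Im; cbn [fst snd].
  rewrite <- sqrt_Rsqr_abs. apply sqrt_le_1_alt. unfold Rsqr. nra.
Qed.

Lemma Cmod_le_Rabs_ReIm c : Cmod c <= Rabs (Re c) + Rabs (Im c).
Proof.
  destruct c as [x y]; unfold Cmod, Re, Im; cbn [fst snd].
  pose proof (Rabs_pos x); pose proof (Rabs_pos y).
  rewrite <- (sqrt_Rsqr (Rabs x + Rabs y)) by lra.
  apply sqrt_le_1_alt. unfold Rsqr.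
  rewrite <- (pow2_abs x), <- (pow2_abs y). nra.
Qed.

Lemma is_series_iff_lim (a : nat -> R) l : is_series a l <-> is_lim_seq (sum_n a) l.
Proof. split; intro H; exact H. Qed.

Lemma is_series_0 : is_series (fun _ : nat => 0) 0.
Proof.
  apply is_series_iff_lim.
  apply (is_lim_seq_ext (fun _ => 0)); [|apply is_lim_seq_const].
  intros n; rewrite sum_n_Reals; induction n; simpl; lra.
Qed.

Lemma ex_series_le_R (a b : nat -> R) : (forall n, Rabs (a n) <= b n) -> ex_series b -> ex_series a.
Proof. apply (@ex_series_le R_AbsRing R_CompleteNormedModule). Qed.

Lemma Rabs_Series_le (a b : nat -> R) : (forall n, Rabs (a n) <= b n) -> ex_series b ->
  Rabs (Series a) <= Series b.
Proof.
  intros H Hb. eapply Rle_trans; [apply Series_Rabs|].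
  - apply (ex_series_le_R _ b); [intros; rewrite Rabs_Rabsolu; auto | auto].
  - apply Series_le; auto. intros; split; [apply Rabs_pos | auto].
Qed.

Lemma Series_tail (a : nat -> R) K : ex_series a ->
  Series (fun i => a (S K + i)%nat) = Series a - sum_n a K.
Proof.
  intros H. rewrite (Series_incr_n a (S K)) by (auto; lia). simpl.
  rewrite sum_n_Reals. ring.
Qed.

Lemma is_lim_seq_le_bound (u e : nat -> R) l :
  (forall n, Rabs (u n - l) <= e n) -> is_lim_seq e 0 -> is_lim_seq u l.
Proof.
  intros H He.
  apply (is_lim_seq_le_le (fun n => l - e n) _ (fun n => l + e n)).
  - intros n. specialize (H n). apply Rabs_le_between in H. lra.
  - replace (Finite l) with (Rbar_minus l 0) by (simpl; f_equal; ring).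
    apply is_lim_seq_minus'; [apply is_lim_seq_const | exact He].
  - replace (Finite l) with (Rbar_plus l 0) by (simpl; f_equal; ring).
    apply is_lim_seq_plus'; [apply is_lim_seq_const | exact He].
Qed.

Definition is_Cseries (a : nat -> C) (l : C) : Prop :=
  is_series (fun n => Re (a n)) (Re l) /\ is_series (fun n => Im (a n)) (Im l).

Lemma is_Cseries_CSeries a l : is_Cseries a l -> CSeries a = l.
Proof. intros [H1 H2]. apply C_ext; apply is_series_unique; auto. Qed.

Lemma is_Cseries_unique a l l' : is_Cseries a l -> is_Cseries a l' -> l = l'.
Proof. intros H H'. rewrite <- (is_Cseries_CSeries _ _ H), <- (is_Cseries_CSeries _ _ H'). auto. Qed.

Lemma CSeries_ext a b : (forall n, a n = b n) -> CSeries a = CSeries b.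
Proof. intros E. unfold CSeries. f_equal; apply Series_ext; intros; rewrite E; auto. Qed.

Lemma is_Cseries_ext a b l l' : (forall n, a n = b n) -> l = l' -> is_Cseries a l -> is_Cseries b l'.
Proof.
  intros E <- [H1 H2]; split; eapply is_series_ext; try eassumption; intros; simpl; rewrite E; auto.
Qed.

Lemma is_Cseries_scal c a l : is_Cseries a l -> is_Cseries (fun n => Cmult c (a n)) (Cmult c l).
Proof.
  intros [H1 H2]; split; simpl.
  - apply (is_series_plus _ _ _ _ (is_series_scal_l (fst c) _ _ H1)).
    apply (is_series_ext (fun n => (- snd c) * snd (a n))); [intros; simpl; ring|].
    replace (- (snd c * snd l)) with (- snd c * snd l) by ring.
    apply (is_series_scal_l _ _ _ H2).
  - apply (is_series_plus _ _ _ _ (is_series_scal_l (fst c) _ _ H2)).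
    apply (is_series_scal_l (snd c) _ _ H1).
Qed.

Lemma is_Cseries_opp a l : is_Cseries a l -> is_Cseries (fun n => Copp (a n)) (Copp l).
Proof.
  intro H. apply (is_Cseries_scal (RtoC (-1))) in H.
  revert H; apply is_Cseries_ext; intros; apply C_ext; simpl; ring.
Qed.

Lemma is_series_incr_1_R (a : nat -> R) (l : R) : is_series a l -> is_series (fun k => a (S k)) (l - a O).
Proof.
  intros H. apply is_series_incr_1. change (is_series a (l - a O + a O)).
  replace (l - a O + a O) with l by ring. exact H.
Qed.

Lemma is_series_decr_1_R (a : nat -> R) (l : R) : is_series (fun k => a (S k)) l -> is_series a (l + a O).
Proof.
  intros H. apply is_series_decr_1. change (is_series (fun k => a (S k)) (l + a O + - a O)).
  replace (l + a O + - a O) with l by ring. exact H.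
Qed.

Lemma is_Cseries_incr_1 a l : is_Cseries a l -> is_Cseries (fun k => a (S k)) (Cminus l (a O)).
Proof.
  intros [H1 H2]; split.
  - exact (is_series_incr_1_R (fun n => Re (a n)) _ H1).
  - exact (is_series_incr_1_R (fun n => Im (a n)) _ H2).
Qed.

Lemma is_Cseries_decr_1 a l : is_Cseries (fun k => a (S k)) l -> is_Cseries a (Cplus l (a O)).
Proof.
  intros [H1 H2]; split.
  - exact (is_series_decr_1_R (fun n => Re (a n)) _ H1).
  - exact (is_series_decr_1_R (fun n => Im (a n)) _ H2).
Qed.

Lemma is_Cseries_0 a : (forall n, a n = RtoC 0) -> is_Cseries a (RtoC 0).
Proof.
  intros E; split; simpl; eapply is_series_ext; try apply is_series_0; intros; rewrite E; reflexivity.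
Qed.

Lemma is_Cseries_dominated a b : (forall n, Cmod (a n) <= b n) -> ex_series b -> is_Cseries a (CSeries a).
Proof.
  intros H Hb. split; unfold CSeries; simpl; apply Series_correct; apply (ex_series_le_R _ b); auto;
    intros n; eapply Rle_trans; try apply H; first [apply re_le_Cmod | apply im_le_Cmod].
Qed.

Lemma Cmod_is_Cseries_le a l b : is_Cseries a l -> (forall n, Cmod (a n) <= b n) -> ex_series b ->
  Cmod l <= 2 * Series b.
Proof.
  intros HC H Hb. rewrite <- (is_Cseries_CSeries _ _ HC). unfold CSeries.
  eapply Rle_trans; [apply Cmod_le_Rabs_ReIm|]. simpl.
  assert (Rabs (Series (fun n => Re (a n))) <= Series b).
  { apply Rabs_Series_le; auto. intros; eapply Rle_trans; [apply re_le_Cmod | auto]. }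
  assert (Rabs (Series (fun n => Im (a n))) <= Series b).
  { apply Rabs_Series_le; auto. intros; eapply Rle_trans; [apply im_le_Cmod | auto]. }
  lra.
Qed.

Fixpoint Csum_n (f : nat -> C) (M : nat) : C :=
  match M with O => f O | S M' => Cplus (Csum_n f M') (f (S M')) end.

Definition is_Clim (u : nat -> C) (l : C) : Prop :=
  is_lim_seq (fun n => Re (u n)) (Re l) /\ is_lim_seq (fun n => Im (u n)) (Im l).

Lemma is_Cseries_Clim a l : is_Cseries a l <-> is_Clim (Csum_n a) l.
Proof.
  assert (ERe : forall M, sum_n (fun n => Re (a n)) M = Re (Csum_n a M)).
  { intros M; rewrite sum_n_Reals; induction M; simpl; auto. rewrite IHM; reflexivity. }
  assert (EIm : forall M, sum_n (fun n => Im (a n)) M = Im (Csum_n a M)).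
  { intros M; rewrite sum_n_Reals; induction M; simpl; auto. rewrite IHM; reflexivity. }
  unfold is_Cseries, is_Clim. rewrite !is_series_iff_lim.
  split; intros [H1 H2]; split; (eapply is_lim_seq_ext; [|eassumption]); intros; simpl; auto.
Qed.

Lemma is_Clim_ext u v l l' : (forall n, u n = v n) -> l = l' -> is_Clim u l -> is_Clim v l'.
Proof.
  intros E <- [H1 H2]; split; (eapply is_lim_seq_ext; [|eassumption]); intros; simpl; rewrite E; auto.
Qed.

Lemma is_Clim_plus u v a b : is_Clim u a -> is_Clim v b -> is_Clim (fun n => Cplus (u n) (v n)) (Cplus a b).
Proof. intros [H1 H2] [H3 H4]; split; simpl; apply is_lim_seq_plus'; auto. Qed.

Lemma is_Clim_scal c u a : is_Clim u a -> is_Clim (fun n => Cmult c (u n)) (Cmult c a).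
Proof.
  intros [H1 H2]; split; simpl.
  - apply is_lim_seq_minus'; apply is_lim_seq_mult'; auto; apply is_lim_seq_const.
  - apply is_lim_seq_plus'; apply is_lim_seq_mult'; auto; apply is_lim_seq_const.
Qed.

Lemma is_Clim_const c : is_Clim (fun _ => c) c.
Proof. split; apply is_lim_seq_const. Qed.

Lemma is_Clim_unique u a b : is_Clim u a -> is_Clim u b -> a = b.
Proof.
  intros [H1 H2] [H3 H4]. apply C_ext.
  - apply is_lim_seq_unique in H1, H3. rewrite H1 in H3. injection H3; auto.
  - apply is_lim_seq_unique in H2, H4. rewrite H2 in H4. injection H4; auto.
Qed.

Lemma is_Clim_le_bound u l e : (forall n, Cmod (Cminus (u n) l) <= e n) -> is_lim_seq e 0 -> is_Clim u l.
Proof.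
  intros H He; split; (eapply is_lim_seq_le_bound; [|exact He]); intros n;
    eapply Rle_trans; try apply (H n);
    [apply (re_le_Cmod (Cminus (u n) l)) | apply (im_le_Cmod (Cminus (u n) l))].
Qed.

(** * Absolutely convergent double series *)

Section DoubleSeries.

Variables (a : nat -> nat -> R) (al be : nat -> R).
Hypotheses (ex_al : ex_series al) (ex_be : ex_series be)
  (a_le : forall k j, Rabs (a k j) <= al k * be j).

Lemma ex_series_row k : ex_series (a k).
Proof. apply (ex_series_le_R _ (fun j => al k * be j)); auto. apply (ex_series_scal_l (al k) be ex_be). Qed.

Lemma ex_series_col j : ex_series (fun k => a k j).
Proof. apply (ex_series_le_R _ (fun k => al k * be j)); auto. apply ex_series_scal_r, ex_al. Qed.

Let col j := Series (fun k => a k j).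

Lemma ex_series_cols : ex_series col.
Proof.
  apply (ex_series_le_R _ (fun j => Series al * be j)); [|apply (ex_series_scal_l _ be ex_be)].
  intros j. unfold col. rewrite <- Series_scal_r. apply Rabs_Series_le; auto. apply ex_series_scal_r, ex_al.
Qed.

Lemma is_series_first_rows K :
  is_series (fun j => sum_n (fun k => a k j) K) (sum_n (fun k => Series (a k)) K).
Proof.
  induction K.
  - apply (is_series_ext (a O)); [intros; rewrite sum_O; reflexivity|]. rewrite sum_O.
    apply Series_correct, ex_series_row.
  - rewrite sum_Sn. eapply is_series_ext;
      [|apply (is_series_plus _ _ _ _ IHK (Series_correct _ (ex_series_row (S K))))].
    intros; rewrite sum_Sn; reflexivity.
Qed.

Lemma Rabs_cols_minus_rows_le K :
  Rabs (Series col - sum_n (fun k => Series (a k)) K) <= Series be * (Series al - sum_n al K).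
Proof.
  assert (E : Series col - sum_n (fun k => Series (a k)) K =
              Series (fun j => Series (fun i => a (S K + i)%nat j))).
  { rewrite <- (is_series_unique _ _ (is_series_first_rows K)), <- Series_minus;
      [|apply ex_series_cols | eexists; apply is_series_first_rows].
    apply Series_ext; intros j. unfold col.
    rewrite (Series_tail (fun k => a k j)); auto. apply ex_series_col. }
  rewrite E, <- Series_scal_r. apply Rabs_Series_le; [|apply ex_series_scal_r, ex_be].
  intros j. rewrite <- Series_tail, <- Series_scal_l by auto. apply Rabs_Series_le.
  - intros i. rewrite Rmult_comm. apply a_le.
  - apply (ex_series_scal_l _ _ (proj1 (ex_series_incr_n al (S K)) ex_al)).
Qed.

Lemma is_series_row_sums : is_series (fun k => Series (a k)) (Series col).
Proof.
  apply is_series_iff_lim.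
  apply (is_lim_seq_le_bound _ (fun K => Series be * (Series al - sum_n al K))).
  - intros K. rewrite <- Rabs_Ropp. replace (- _) with (Series col - sum_n (fun k => Series (a k)) K) by ring.
    apply Rabs_cols_minus_rows_le.
  - replace (Finite 0) with (Rbar_mult (Series be) (Rbar_minus (Series al) (Series al)))
      by (simpl; f_equal; ring).
    apply is_lim_seq_scal_l, is_lim_seq_minus'; [apply is_lim_seq_const | apply Series_correct, ex_al].
Qed.

End DoubleSeries.

Lemma is_Cseries_fubini (A : nat -> nat -> C) (al be : nat -> R) (row col : nat -> C) :
  ex_series al -> ex_series be ->
  (forall k j, Cmod (A k j) <= al k * be j) ->
  (forall k, is_Cseries (A k) (row k)) -> (forall j, is_Cseries (fun k => A k j) (col j)) ->
  exists S, is_Cseries row S /\ is_Cseries col S.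
Proof.
  intros Eal Ebe HA Hrow Hcol.
  assert (HRe : forall k j, Rabs (Re (A k j)) <= al k * be j)
    by (intros; eapply Rle_trans; [apply re_le_Cmod | auto]).
  assert (HIm : forall k j, Rabs (Im (A k j)) <= al k * be j)
    by (intros; eapply Rle_trans; [apply im_le_Cmod | auto]).
  assert (Tr : forall f : nat -> nat -> R, (forall k j, Rabs (f k j) <= al k * be j) ->
                 forall j k, Rabs (f k j) <= be j * al k)
    by (intros f Hf j k; rewrite Rmult_comm; auto).
  pose proof (is_series_row_sums _ _ _ Eal Ebe HRe) as R1.
  pose proof (is_series_row_sums _ _ _ Eal Ebe HIm) as R2.
  pose proof (is_series_row_sums _ _ _ Ebe Eal (Tr _ HRe)) as C1.
  pose proof (is_series_row_sums _ _ _ Ebe Eal (Tr _ HIm)) as C2.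
  cbv beta in R1, R2, C1, C2.
  assert (Erow : forall k, row k = CSeries (A k))
    by (intros; symmetry; apply is_Cseries_CSeries, Hrow).
  assert (Ecol : forall j, col j = CSeries (fun k => A k j))
    by (intros; symmetry; apply is_Cseries_CSeries, Hcol).
  exists (Series (fun j => Series (fun k => Re (A k j))), Series (fun j => Series (fun k => Im (A k j)))).
  split; split; simpl.
  - eapply is_series_ext; [|exact R1]. intros k. rewrite Erow. reflexivity.
  - eapply is_series_ext; [|exact R2]. intros k. rewrite Erow. reflexivity.
  - rewrite <- (is_series_unique _ _ R1). eapply is_series_ext; [|exact C1].
    intros j. rewrite Ecol. reflexivity.
  - rewrite <- (is_series_unique _ _ R2). eapply is_series_ext; [|exact C2].
    intros j. rewrite Ecol. reflexivity.
Qed.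

(** * Tails of the series of n^(-b) *)

Lemma Rpower_pos x y : 0 < Rpower x y.
Proof. apply exp_pos. Qed.

Lemma ex_series_nonneg_bounded (a : nat -> R) M :
  (forall n, 0 <= a n) -> (forall n, sum_f_R0 a n <= M) -> ex_series a /\ Series a <= M.
Proof.
  intros Hp HM.
  assert (Hinc : forall n, sum_n a n <= sum_n a (S n)).
  { intros n. rewrite !sum_n_Reals. simpl. specialize (Hp (S n)). lra. }
  assert (HM' : forall n, sum_n a n <= M) by (intros; rewrite sum_n_Reals; auto).
  destruct (ex_finite_lim_seq_incr _ M Hinc HM') as [l Hl].
  assert (Hs : is_series a l) by exact Hl.
  split; [exists l; auto|].
  rewrite (is_series_unique _ _ Hs).
  exact (is_lim_seq_le _ _ l M HM' Hl (is_lim_seq_const M)).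
Qed.

Lemma Rpower_diff_ge b x : 1 < b -> 1 <= x ->
  (b - 1) * Rpower (x + 1) (- b) <= Rpower x (1 - b) - Rpower (x + 1) (1 - b).
Proof.
  intros Hb Hx.
  destruct (MVT_cor2 (fun y => Rpower y (1 - b)) (fun y => (1 - b) * Rpower y (1 - b - 1)) x (x + 1))
    as [c [Hc1 Hc2]]; [lra | intros c Hc; apply derivable_pt_lim_power; lra |].
  replace (1 - b - 1) with (- b) in Hc1 by ring.
  replace (x + 1 - x) with 1 in Hc1 by ring.
  assert (Rpower (x + 1) (- b) <= Rpower c (- b)).
  { rewrite !Rpower_Ropp. apply Rinv_le_contravar; [apply Rpower_pos | apply Rle_Rpower_l; lra]. }
  nra.
Qed.

Lemma Rpower_opp_le_succ b x : 0 <= b -> 1 <= x ->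
  Rpower x (- b) <= Rpower 2 b * Rpower (x + 1) (- b).
Proof.
  intros Hb Hx. rewrite !Rpower_Ropp.
  assert (Rpower (x + 1) b <= Rpower 2 b * Rpower x b).
  { rewrite Rpower_mult_distr by lra. apply Rle_Rpower_l; lra. }
  pose proof (Rpower_pos x b). pose proof (Rpower_pos (x + 1) b). pose proof (Rpower_pos 2 b).
  apply (Rmult_le_reg_r (Rpower x b * Rpower (x + 1) b)); [nra|].
  field_simplify; lra.
Qed.

Definition zeta_tail_const (b : R) : R := Rpower 2 b / (b - 1).

Lemma zeta_tail_const_ge0 b : 1 < b -> 0 <= zeta_tail_const b.
Proof.
  intros. unfold zeta_tail_const. apply Rmult_le_pos; [left; apply Rpower_pos|].
  left; apply Rinv_0_lt_compat; lra.
Qed.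

Lemma sum_Rpower_tail_le b m J : 1 < b -> (1 <= m)%nat ->
  sum_f_R0 (fun j => Rpower (INR (m + j)) (- b)) J <= zeta_tail_const b * Rpower (INR m) (1 - b).
Proof.
  intros Hb Hm.
  assert (Hm' : 1 <= INR m) by (apply (le_INR 1); auto).
  assert (Tel : forall K, (b - 1) * sum_f_R0 (fun j => Rpower (INR (m + j) + 1) (- b)) K
                          <= Rpower (INR m) (1 - b) - Rpower (INR (m + K) + 1) (1 - b)).
  { induction K as [|K IH].
    - simpl. rewrite Nat.add_0_r. apply Rpower_diff_ge; auto.
    - simpl sum_f_R0. rewrite Rmult_plus_distr_l.
      pose proof (Rpower_diff_ge b (INR (m + S K)) Hb) as T.
      replace (INR (m + S K)) with (INR (m + K) + 1) in * by (rewrite Nat.add_succ_r, S_INR; ring).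
      pose proof (pos_INR (m + K)). specialize (T ltac:(lra)). lra. }
  assert (Shift : sum_f_R0 (fun j => Rpower (INR (m + j)) (- b)) J <=
                  Rpower 2 b * sum_f_R0 (fun j => Rpower (INR (m + j) + 1) (- b)) J).
  { induction J as [|J IH]; simpl.
    - apply Rpower_opp_le_succ; [lra | rewrite Nat.add_0_r; auto].
    - rewrite Rmult_plus_distr_l. apply Rplus_le_compat; auto.
      apply Rpower_opp_le_succ; [lra | apply (le_INR 1); lia]. }
  specialize (Tel J).
  pose proof (Rpower_pos (INR (m + J) + 1) (1 - b)). pose proof (Rpower_pos 2 b).
  assert (sum_f_R0 (fun j => Rpower (INR (m + j) + 1) (- b)) J <= Rpower (INR m) (1 - b) / (b - 1)).
  { apply (Rmult_le_reg_l (b - 1)); [lra|]. field_simplify; lra. }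
  unfold zeta_tail_const.
  replace (Rpower 2 b / (b - 1) * Rpower (INR m) (1 - b))
    with (Rpower 2 b * (Rpower (INR m) (1 - b) / (b - 1))) by (field; lra).
  eapply Rle_trans; [exact Shift|]. apply Rmult_le_compat_l; lra.
Qed.

Lemma Rpower_tail_series b m : 1 < b -> (1 <= m)%nat ->
  ex_series (fun j => Rpower (INR (m + j)) (- b)) /\
  Series (fun j => Rpower (INR (m + j)) (- b)) <= zeta_tail_const b * Rpower (INR m) (1 - b).
Proof.
  intros Hb Hm. apply ex_series_nonneg_bounded.
  - intros; left; apply Rpower_pos.
  - intros J. apply sum_Rpower_tail_le; auto.
Qed.

(** * Derivatives of complex-valued functions *)

Lemma is_derive_const_R (c x : R) : is_derive (fun _ => c) x 0.
Proof. apply (is_derive_const c x). Qed.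

Lemma is_derive_plus_R (f g : R -> R) x a b : is_derive f x a -> is_derive g x b ->
  is_derive (fun u => f u + g u) x (a + b).
Proof. intros. apply (is_derive_plus f g x a b); auto. Qed.

Lemma is_derive_minus_R (f g : R -> R) x a b : is_derive f x a -> is_derive g x b ->
  is_derive (fun u => f u - g u) x (a - b).
Proof. intros. apply (is_derive_minus f g x a b); auto. Qed.

Lemma is_derive_mult_R (f g : R -> R) x a b : is_derive f x a -> is_derive g x b ->
  is_derive (fun u => f u * g u) x (a * g x + f x * b).
Proof. intros. apply (is_derive_mult f g x a b); auto. intros; apply Rmult_comm. Qed.

Definition is_Cderive (f : R -> C) (t : R) (l : C) : Prop :=
  is_derive (fun u => Re (f u)) t (Re l) /\ is_derive (fun u => Im (f u)) t (Im l).

Lemma is_Cderive_eq f t l l' : l = l' -> is_Cderive f t l -> is_Cderive f t l'.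
Proof. intros <-; auto. Qed.

Lemma is_Cderive_plus f g t a b : is_Cderive f t a -> is_Cderive g t b ->
  is_Cderive (fun u => Cplus (f u) (g u)) t (Cplus a b).
Proof. intros [H1 H2] [H3 H4]; split; apply is_derive_plus_R; auto. Qed.

Lemma is_Cderive_mult f g t a b : is_Cderive f t a -> is_Cderive g t b ->
  is_Cderive (fun u => Cmult (f u) (g u)) t (Cplus (Cmult a (g t)) (Cmult (f t) b)).
Proof.
  intros [H1 H2] [H3 H4]; split; simpl.
  - match goal with |- is_derive _ _ ?l =>
      replace l with ((Re a * Re (g t) + Re (f t) * Re b) - (Im a * Im (g t) + Im (f t) * Im b))
        by (unfold Re, Im; simpl; ring) end.
    apply is_derive_minus_R; apply is_derive_mult_R; auto.
  - match goal with |- is_derive _ _ ?l =>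
      replace l with ((Re a * Im (g t) + Re (f t) * Im b) + (Im a * Re (g t) + Im (f t) * Re b))
        by (unfold Re, Im; simpl; ring) end.
    apply is_derive_plus_R; apply is_derive_mult_R; auto.
Qed.

Lemma is_Cderive_const (c : C) t : is_Cderive (fun _ => c) t (RtoC 0).
Proof. split; simpl; apply is_derive_const_R. Qed.

Lemma is_Cderive_scal c f t a : is_Cderive f t a -> is_Cderive (fun u => Cmult c (f u)) t (Cmult c a).
Proof.
  intros H. apply (is_Cderive_mult _ _ _ _ _ (is_Cderive_const c t)) in H.
  revert H; apply is_Cderive_eq. ring.
Qed.

Lemma is_Cderive_pow (n : nat) t : is_Cderive (fun u => RtoC (u ^ n)) t (RtoC (INR n * t ^ pred n)).
Proof.
  split; simpl; [|apply is_derive_const_R].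
  replace (INR n * t ^ pred n) with (INR n * 1 * t ^ pred n) by ring.
  apply (is_derive_pow (fun u => u) n t 1), (is_derive_id (K := R_AbsRing)).
Qed.

Lemma is_Cderive_Csum_n (f : nat -> R -> C) (f' : nat -> R -> C) M t :
  (forall j, is_Cderive (f j) t (f' j t)) ->
  is_Cderive (fun u => Csum_n (fun j => f j u) M) t (Csum_n (fun j => f' j t) M).
Proof. intros H. induction M; simpl; auto. apply is_Cderive_plus; auto. Qed.

Lemma is_Cderive_cpow_pos_1p a t : -1 < t ->
  is_Cderive (fun u => cpow_pos (1 + u) a) t
             (Cmult (Cmult a (cpow_pos (1 + t) a)) (RtoC (/ (1 + t)))).
Proof.
  intros Ht. unfold cpow_pos. destruct a as [p q].
  split; cbn [Re Im fst snd].
  - match goal with |- is_derive _ _ ?l =>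
      replace l with (exp (p * ln (1 + t)) * (p * / (1 + t)) * cos (q * ln (1 + t)) +
                      exp (p * ln (1 + t)) * (- sin (q * ln (1 + t)) * (q * / (1 + t))))
        by (simpl; field; lra) end.
    auto_derive; [lra | ring].
  - match goal with |- is_derive _ _ ?l =>
      replace l with (exp (p * ln (1 + t)) * (p * / (1 + t)) * sin (q * ln (1 + t)) +
                      exp (p * ln (1 + t)) * (cos (q * ln (1 + t)) * (q * / (1 + t))))
        by (simpl; field; lra) end.
    auto_derive; [lra | ring].
Qed.

Lemma mean_value_Rabs_le (g g' : R -> R) t B : 0 < t ->
  (forall u, 0 <= u <= t -> is_derive g u (g' u)) -> (forall u, 0 <= u <= t -> Rabs (g' u) <= B) ->
  Rabs (g t - g 0) <= B * t.
Proof.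
  intros Ht Hd HB.
  destruct (MVT_cor2 g g' 0 t Ht) as [c [Hc1 Hc2]].
  - intros c Hc. apply is_derive_Reals, Hd; lra.
  - rewrite Hc1, Rabs_mult, Rminus_0_r, (Rabs_right t) by lra.
    apply Rmult_le_compat_r; [lra | apply HB; lra].
Qed.

Lemma mean_value_Cmod_le (g g' : R -> C) t B : 0 < t ->
  (forall u, 0 <= u <= t -> is_Cderive g u (g' u)) -> (forall u, 0 <= u <= t -> Cmod (g' u) <= B) ->
  Cmod (Cminus (g t) (g 0)) <= 2 * (B * t).
Proof.
  intros Ht Hd HB. eapply Rle_trans; [apply Cmod_le_Rabs_ReIm|].
  assert (Rabs (Re (g t) - Re (g 0)) <= B * t).
  { apply (mean_value_Rabs_le (fun u => Re (g u)) (fun u => Re (g' u))); auto.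
    - intros; apply Hd; auto.
    - intros; eapply Rle_trans; [apply re_le_Cmod | auto]. }
  assert (Rabs (Im (g t) - Im (g 0)) <= B * t).
  { apply (mean_value_Rabs_le (fun u => Im (g u)) (fun u => Im (g' u))); auto.
    - intros; apply Hd; auto.
    - intros; eapply Rle_trans; [apply im_le_Cmod | auto]. }
  replace (Re (Cminus (g t) (g 0))) with (Re (g t) - Re (g 0)) by (unfold Re; simpl; ring).
  replace (Im (Cminus (g t) (g 0))) with (Im (g t) - Im (g 0)) by (unfold Im; simpl; ring).
  lra.
Qed.

(** * The binomial series *)

Lemma RtoC_INR_S_neq_0 j : RtoC (INR (S j)) <> RtoC 0.
Proof. intro H. apply RtoC_inj in H. pose proof (pos_INR j). rewrite S_INR in H. lra. Qed.

Fixpoint Cbinom (a : C) (j : nat) : C :=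
  match j with
  | O => RtoC 1
  | S j' => Cdiv (Cmult (Cbinom a j') (Cminus a (RtoC (INR j')))) (RtoC (INR (S j')))
  end.

Fixpoint rising_binom (A : R) (j : nat) : R :=
  match j with
  | O => 1
  | S j' => rising_binom A j' * (A + INR j') / INR (S j')
  end.

Lemma rising_binom_pos A j : 0 < A -> 0 < rising_binom A j.
Proof.
  intros HA. induction j; cbn [rising_binom]; [lra|].
  pose proof (pos_INR j). pose proof (lt_0_INR (S j) ltac:(lia)).
  apply Rdiv_lt_0_compat; [apply Rmult_lt_0_compat|]; lra.
Qed.

Lemma Cmod_Cbinom_le a j : Cmod (Cbinom a j) <= rising_binom (Cmod a + 1) j.
Proof.
  induction j; cbn [Cbinom rising_binom]; [rewrite Cmod_1; lra|].
  pose proof (lt_0_INR (S j) ltac:(lia)).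
  rewrite Cmod_div, Cmod_mult, Cmod_R, (Rabs_right (INR (S j))) by (apply RtoC_INR_S_neq_0 || lra).
  unfold Rdiv. apply Rmult_le_compat_r; [left; apply Rinv_0_lt_compat; auto|].
  apply Rmult_le_compat; try apply Cmod_ge_0; auto.
  eapply Rle_trans; [apply Cmod_triangle|]. rewrite Cmod_opp, Cmod_R, Rabs_right; [lra|].
  apply Rle_ge, pos_INR.
Qed.

Definition binom_weight (A t : R) (M : nat) : R := INR (S M) * rising_binom A (S M) * t ^ M.

Lemma is_lim_seq_inv_S : is_lim_seq (fun M => / INR (S M)) 0.
Proof.
  assert (H : is_lim_seq (fun M => INR (S M)) p_infty)
    by (apply (is_lim_seq_incr_1 INR), is_lim_seq_INR).
  apply is_lim_seq_inv in H; [exact H | discriminate].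
Qed.

Lemma ex_series_binom_weight A t : 0 < A -> 0 < t < 1 -> ex_series (binom_weight A t).
Proof.
  intros HA Ht.
  assert (Hpos : forall M, 0 < binom_weight A t M).
  { intros M. unfold binom_weight. apply Rmult_lt_0_compat; [apply Rmult_lt_0_compat|].
    - apply lt_0_INR; lia.
    - apply rising_binom_pos; auto.
    - apply pow_lt; lra. }
  apply ex_series_Rabs, (ex_series_DAlembert _ t); [lra | intros n; specialize (Hpos n); lra|].
  apply (is_lim_seq_ext (fun M => t + t * A * / INR (S M))).
  - intros M. rewrite Rabs_right by (apply Rle_ge, Rlt_le, Rdiv_lt_0_compat; auto).
    unfold binom_weight. change (rising_binom A (S (S M)))
      with (rising_binom A (S M) * (A + INR (S M)) / INR (S (S M))).
    simpl pow.
    pose proof (lt_0_INR (S M) ltac:(lia)). pose proof (lt_0_INR (S (S M)) ltac:(lia)).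
    pose proof (rising_binom_pos A (S M) HA). pose proof (pow_lt t M ltac:(lra)).
    rewrite (S_INR (S M)). rewrite S_INR in *. field. repeat split; lra.
  - pose proof (is_lim_seq_scal_l _ (t * A) _ is_lim_seq_inv_S) as H. simpl in H.
    replace t with (t + t * A * 0) at 1 by ring.
    apply is_lim_seq_plus'; [apply is_lim_seq_const | exact H].
Qed.

Definition binom_partial (a : C) (M : nat) (t : R) : C :=
  Csum_n (fun j => Cmult (Cbinom a j) (RtoC (t ^ j))) M.

Definition binom_partial_deriv (a : C) (M : nat) (t : R) : C :=
  Csum_n (fun j => Cmult (Cbinom a j) (RtoC (INR j * t ^ pred j))) M.

Lemma is_Cderive_binom_partial a M t : is_Cderive (binom_partial a M) t (binom_partial_deriv a M t).
Proof.
  apply (is_Cderive_Csum_n (fun j u => Cmult (Cbinom a j) (RtoC (u ^ j)))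
                           (fun j u => Cmult (Cbinom a j) (RtoC (INR j * u ^ pred j)))).
  intros j. apply is_Cderive_scal, is_Cderive_pow.
Qed.

Lemma binom_partial_ode a M t :
  Cminus (Cmult (RtoC (1 + t)) (binom_partial_deriv a M t)) (Cmult a (binom_partial a M t)) =
  Copp (Cmult (RtoC (INR (S M))) (Cmult (Cbinom a (S M)) (RtoC (t ^ M)))).
Proof.
  unfold binom_partial, binom_partial_deriv.
  induction M as [|M IH]; cbn [Csum_n].
  - cbn [Cbinom pow]. change (INR 1) with 1. apply C_ext; simpl; field.
  - assert (Split : forall c x x' y y', Cminus (Cmult c (Cplus x x')) (Cmult a (Cplus y y')) =
                      Cplus (Cminus (Cmult c x) (Cmult a y)) (Cminus (Cmult c x') (Cmult a y')))
      by (intros; ring).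
    rewrite Split, IH. cbn [pred]. change (Cbinom a (S (S M))) with
      (Cdiv (Cmult (Cbinom a (S M)) (Cminus a (RtoC (INR (S M))))) (RtoC (INR (S (S M))))).
    pose proof (RtoC_INR_S_neq_0 (S M)) as Hnz.
    rewrite (S_INR (S M)) in *. rewrite ?RtoC_mult, ?RtoC_plus, ?RtoC_pow in *.
    cbn [Cpow]. field. exact Hnz.
Qed.

(* The partial sums of the binomial series divided by (1+t)^a.  By [binom_partial_ode] its
   derivative only involves the first omitted term, so it stays close to its value 1 at 0. *)
Definition binom_defect (a : C) (M : nat) (t : R) : C :=
  Cmult (binom_partial a M t) (cpow_pos (1 + t) (Copp a)).

Definition binom_defect_deriv (a : C) (M : nat) (u : R) : C :=
  Copp (Cmult (Cmult (RtoC (INR (S M))) (Cmult (Cbinom a (S M)) (RtoC (u ^ M))))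
              (Cmult (cpow_pos (1 + u) (Copp a)) (RtoC (/ (1 + u))))).

Lemma is_Cderive_binom_defect a M u : -1 < u ->
  is_Cderive (binom_defect a M) u (binom_defect_deriv a M u).
Proof.
  intros Hu. eapply is_Cderive_eq; [|exact (is_Cderive_mult _ _ u _ _ (is_Cderive_binom_partial a M u)
                                                  (is_Cderive_cpow_pos_1p (Copp a) u Hu))].
  assert (Hnz : RtoC (1 + u) <> RtoC 0) by (intro X; apply RtoC_inj in X; lra).
  transitivity (Cmult (Cminus (Cmult (RtoC (1 + u)) (binom_partial_deriv a M u))
                              (Cmult a (binom_partial a M u)))
                      (Cmult (cpow_pos (1 + u) (Copp a)) (RtoC (/ (1 + u))))).
  - rewrite RtoC_inv by lra. field. auto.
  - rewrite binom_partial_ode. unfold binom_defect_deriv. ring.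
Qed.

Lemma Rpower_1p_le x a : 0 <= x <= 1 -> Rpower (1 + x) a <= Rpower 2 (Rabs a).
Proof.
  intros Hx. apply Rle_trans with (Rpower (1 + x) (Rabs a)).
  - apply Rle_Rpower; [lra | apply Rle_abs].
  - apply Rle_Rpower_l; [apply Rabs_pos | lra].
Qed.

Lemma Cmod_binom_defect_deriv_le a M t u : 0 <= u <= t -> t <= 1 ->
  Cmod (binom_defect_deriv a M u) <= Rpower 2 (Rabs (Re a)) * binom_weight (Cmod a + 1) t M.
Proof.
  intros Hu Ht. unfold binom_defect_deriv. rewrite Cmod_opp, !Cmod_mult, !Cmod_R, Cmod_cpow_pos.
  unfold binom_weight.
  assert (H1 : Rpower (1 + u) (Re (Copp a)) * Rabs (/ (1 + u)) <= Rpower 2 (Rabs (Re a))).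
  { rewrite <- (Rmult_1_r (Rpower 2 _)). pose proof (Rabs_pos (/ (1 + u))).
    apply Rmult_le_compat; [left; apply Rpower_pos | auto | |].
    - replace (Rabs (Re a)) with (Rabs (Re (Copp a))) by (simpl; apply Rabs_Ropp).
      apply Rpower_1p_le; lra.
    - rewrite Rabs_right by (apply Rle_ge, Rlt_le, Rinv_0_lt_compat; lra).
      rewrite <- Rinv_1. apply Rinv_le_contravar; lra. }
  assert (H2 : Cmod (Cbinom a (S M)) * Rabs (u ^ M) <= rising_binom (Cmod a + 1) (S M) * t ^ M).
  { apply Rmult_le_compat; [apply Cmod_ge_0 | apply Rabs_pos | apply Cmod_Cbinom_le |].
    rewrite Rabs_right by (apply Rle_ge, pow_le; lra). apply pow_incr; lra. }
  rewrite (Rabs_right (INR (S M))) by (apply Rle_ge, pos_INR).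
  pose proof (pos_INR (S M)).
  pose proof (Rmult_le_pos _ _ (Cmod_ge_0 (Cbinom a (S M))) (Rabs_pos (u ^ M))).
  pose proof (Rmult_le_pos _ _ (Rlt_le _ _ (Rpower_pos (1 + u) (Re (Copp a)))) (Rabs_pos (/ (1 + u)))).
  replace (Rpower 2 (Rabs (Re a)) * (INR (S M) * rising_binom (Cmod a + 1) (S M) * t ^ M))
    with ((INR (S M) * (rising_binom (Cmod a + 1) (S M) * t ^ M)) * Rpower 2 (Rabs (Re a))) by ring.
  apply Rmult_le_compat; [nra | auto | apply Rmult_le_compat_l; auto | auto].
Qed.

Lemma binom_defect_0 a M : binom_defect a M 0 = RtoC 1.
Proof.
  unfold binom_defect, binom_partial.
  replace (Csum_n _ M) with (RtoC 1).
  - rewrite Rplus_0_r, cpow_pos_Cexp, ln_1.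
    replace (Cmult (Copp a) (RtoC 0)) with (RtoC 0) by ring. rewrite Cexp_0. ring.
  - induction M as [|M IH]; cbn [Csum_n]; [simpl; ring|].
    rewrite <- IH. simpl pow. rewrite Rmult_0_l. ring.
Qed.

Lemma is_Clim_binom_defect a t : 0 < t < 1 -> is_Clim (fun M => binom_defect a M t) (RtoC 1).
Proof.
  intros Ht. set (K := Rpower 2 (Rabs (Re a))).
  apply (is_Clim_le_bound _ _ (fun M => 2 * (K * binom_weight (Cmod a + 1) t M * t))).
  - intros M. rewrite <- (binom_defect_0 a M).
    apply (mean_value_Cmod_le _ (binom_defect_deriv a M)); [lra | |].
    + intros u Hu. apply is_Cderive_binom_defect. lra.
    + intros u Hu. apply Cmod_binom_defect_deriv_le; lra.
  - assert (HA : 0 < Cmod a + 1) by (pose proof (Cmod_ge_0 a); lra).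
    pose proof (ex_series_lim_0 _ (ex_series_binom_weight (Cmod a + 1) t HA Ht)) as H.
    apply (is_lim_seq_scal_l _ K 0), (is_lim_seq_scal_r _ t (K * 0)),
          (is_lim_seq_scal_l _ 2 (K * 0 * t)) in H.
    simpl in H. replace (2 * (K * 0 * t)) with 0 in H by ring. exact H.
Qed.

Lemma is_Cseries_binom a t : 0 < t < 1 ->
  is_Cseries (fun j => Cmult (Cbinom a j) (RtoC (t ^ j))) (cpow_pos (1 + t) a).
Proof.
  intros Ht. apply is_Cseries_Clim.
  apply (is_Clim_ext (fun M => Cmult (cpow_pos (1 + t) a) (binom_defect a M t)) _
                     (Cmult (cpow_pos (1 + t) a) (RtoC 1)));
    [| ring | apply is_Clim_scal, is_Clim_binom_defect; auto].
  intros M. unfold binom_defect. fold (binom_partial a M t).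
  rewrite Cmult_comm, <- Cmult_assoc, cpow_pos_opp_mul. ring.
Qed.

Definition binom_diff_coef (s : C) (k : nat) : C :=
  Cmult (Cpow (RtoC (-1)) k) (Cdiv (poch (Cminus s (RtoC 1)) (S k)) (RtoC (INR (fact (S k))))).

Lemma Cbinom_1_minus s j : Cbinom (Cminus (RtoC 1) s) j =
  Cmult (Cpow (RtoC (-1)) j) (Cdiv (poch (Cminus s (RtoC 1)) j) (RtoC (INR (fact j)))).
Proof.
  induction j as [|j IH]; [apply C_ext; simpl; field|].
  cbn [Cbinom poch Cpow]. rewrite IH.
  replace (fact (S j)) with (S j * fact j)%nat by reflexivity.
  rewrite mult_INR, RtoC_mult.
  assert (RtoC (INR (fact j)) <> RtoC 0) by (intro H; apply RtoC_inj, (INR_fact_neq_0 j) in H; auto).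
  pose proof (RtoC_INR_S_neq_0 j).
  field. auto.
Qed.

Lemma binom_diff_coef_Cbinom s k : binom_diff_coef s k = Copp (Cbinom (Cminus (RtoC 1) s) (S k)).
Proof. rewrite Cbinom_1_minus. unfold binom_diff_coef. cbn [Cpow]. ring. Qed.

Lemma ex_series_binom_diff_coef s : ex_series (fun k => Cmod (binom_diff_coef s k) * (/ 2) ^ k).
Proof.
  set (A := Cmod (Cminus (RtoC 1) s) + 1).
  apply (ex_series_le_R _ (binom_weight A (/ 2))).
  - intros k. pose proof (pow_le (/ 2) k ltac:(lra)).
    rewrite Rabs_right by (apply Rle_ge, Rmult_le_pos; [apply Cmod_ge_0 | auto]).
    rewrite binom_diff_coef_Cbinom, Cmod_opp. unfold binom_weight.
    pose proof (Cmod_Cbinom_le (Cminus (RtoC 1) s) (S k)). fold A in H0.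
    assert (1 <= INR (S k)) by (apply (le_INR 1); lia).
    pose proof (Cmod_ge_0 (Cbinom (Cminus (RtoC 1) s) (S k))).
    apply Rle_trans with (1 * (rising_binom A (S k) * (/ 2) ^ k));
      [rewrite Rmult_1_l; apply Rmult_le_compat_r; auto|].
    replace (INR (S k) * rising_binom A (S k) * (/ 2) ^ k)
      with (INR (S k) * (rising_binom A (S k) * (/ 2) ^ k)) by ring.
    apply Rmult_le_compat_r; [apply Rmult_le_pos; lra | auto].
  - apply ex_series_binom_weight; [unfold A; pose proof (Cmod_ge_0 (Cminus (RtoC 1) s)); lra | lra].
Qed.

Lemma is_Cseries_cpow_pos_diff s (x : R) : 1 < x ->
  is_Cseries (fun k => Cmult (binom_diff_coef s k) (Cinv (cpow_pos x (Cplus s (RtoC (INR k))))))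
    (Cminus (cpow_pos x (Cminus (RtoC 1) s)) (cpow_pos (x + 1) (Cminus (RtoC 1) s))).
Proof.
  intros Hx. set (a := Cminus (RtoC 1) s).
  assert (Hx' : 0 < / x < 1)
    by (split; [apply Rinv_0_lt_compat | rewrite <- Rinv_1; apply Rinv_lt_contravar]; lra).
  pose proof (is_Cseries_scal (cpow_pos x a) _ _ (is_Cseries_binom a (/ x) Hx')) as H.
  apply is_Cseries_opp, is_Cseries_incr_1 in H.
  revert H; apply is_Cseries_ext.
  - intros k. rewrite binom_diff_coef_Cbinom. fold a.
    assert (E1 : Cmult (cpow_pos x (Cplus s (RtoC (INR k)))) (cpow_pos x a) = RtoC (x ^ S k)).
    { rewrite <- cpow_pos_add, <- (cpow_pos_INR x (S k)) by lra. f_equal. unfold a.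
      rewrite S_INR. apply C_ext; simpl; ring. }
    assert (E2 : RtoC ((/ x) ^ S k) = Cinv (RtoC (x ^ S k))).
    { rewrite <- RtoC_inv by (apply pow_nonzero; lra). f_equal. apply pow_inv. }
    rewrite E2, <- E1.
    pose proof (cpow_pos_neq_0 x (Cplus s (RtoC (INR k)))). pose proof (cpow_pos_neq_0 x a).
    field. split; auto.
  - rewrite <- (cpow_pos_mult_distr x (1 + / x)), Rmult_plus_distr_l, Rinv_r by lra.
    cbn [Cbinom pow]. rewrite Rmult_1_r. ring.
Qed.

(** * Depth-one tails *)

Definition Li_term (w s : C) (n : nat) : C := Cdiv (Cpow w n) (cpow_pos (INR n) s).

Definition Li_tail (w s : C) (m : nat) : C := nested_tail [(w, s)] m.

Lemma Li_tail_CSeries w s m : Li_tail w s m = CSeries (fun j => Li_term w s (m + j)).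
Proof. apply CSeries_ext. intros j. apply Cmult_1_r. Qed.

Lemma Cmod_Li_term_le w s n : Cmod w <= 1 -> Cmod (Li_term w s n) <= Rpower (INR n) (- Re s).
Proof.
  intros Hw. unfold Li_term.
  rewrite Cmod_div by apply cpow_pos_neq_0. rewrite Cmod_pow, Cmod_cpow_pos, Rpower_Ropp.
  rewrite <- (Rmult_1_l (/ Rpower (INR n) (Re s))). unfold Rdiv.
  apply Rmult_le_compat_r; [left; apply Rinv_0_lt_compat, Rpower_pos|].
  rewrite <- (pow1 n). apply pow_incr. split; [apply Cmod_ge_0 | auto].
Qed.

Lemma Rpower_opp_plus_INR_le x sg k : 2 <= x ->
  Rpower x (- (sg + INR k)) <= (/ 2) ^ k * Rpower x (- sg).
Proof.
  intros Hx. replace (- (sg + INR k)) with (- sg + - INR k) by ring.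
  rewrite Rpower_plus, (Rpower_Ropp x (INR k)), Rpower_pow by lra.
  rewrite Rmult_comm. apply Rmult_le_compat_r; [left; apply Rpower_pos|].
  rewrite pow_inv. apply Rinv_le_contravar; [apply pow_lt; lra | apply pow_incr; lra].
Qed.

Lemma CSeries_tail_dominated (a : nat -> C) m c sg : 1 < sg -> (1 <= m)%nat -> 0 <= c ->
  (forall j, Cmod (a j) <= c * Rpower (INR (m + j)) (- sg)) ->
  is_Cseries a (CSeries a) /\ Cmod (CSeries a) <= 2 * c * zeta_tail_const sg * Rpower (INR m) (1 - sg).
Proof.
  intros Hsg Hm Hc Hb. destruct (Rpower_tail_series sg m Hsg Hm) as [E S].
  assert (E' : ex_series (fun j => c * Rpower (INR (m + j)) (- sg))) by apply (ex_series_scal_l _ _ E).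
  pose proof (is_Cseries_dominated _ _ Hb E') as H. split; auto.
  eapply Rle_trans; [apply (Cmod_is_Cseries_le _ _ _ H Hb E')|].
  rewrite Series_scal_l. pose proof (Rmult_le_compat_l _ _ _ Hc S). lra.
Qed.

Lemma is_Cseries_Li_tail w s m : Cmod w <= 1 -> 1 < Re s -> (1 <= m)%nat ->
  is_Cseries (fun j => Li_term w s (m + j)) (Li_tail w s m).
Proof.
  intros Hw Hs Hm. rewrite Li_tail_CSeries.
  apply (CSeries_tail_dominated _ m 1 (Re s)); auto; [lra|].
  intros j. rewrite Rmult_1_l. apply Cmod_Li_term_le; auto.
Qed.

Lemma Cmod_Li_tail_shift_le w s k m : Cmod w <= 1 -> 1 < Re s -> (2 <= m)%nat ->
  Cmod (Li_tail w (Cplus s (RtoC (INR k))) m)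
  <= (/ 2) ^ k * (2 * zeta_tail_const (Re s)) * Rpower (INR m) (1 - Re s).
Proof.
  intros Hw Hs Hm.
  replace ((/ 2) ^ k * (2 * zeta_tail_const (Re s))) with (2 * (/ 2) ^ k * zeta_tail_const (Re s)) by ring.
  rewrite Li_tail_CSeries.
  apply (CSeries_tail_dominated _ m ((/ 2) ^ k) (Re s)); auto; [lia | apply pow_le; lra|].
  intros j. eapply Rle_trans; [apply Cmod_Li_term_le; auto|].
  apply Rpower_opp_plus_INR_le, (le_INR 2); lia.
Qed.

Lemma is_lim_seq_Rpower_opp b : 0 < b -> is_lim_seq (fun n => Rpower (INR n) (- b)) 0.
Proof.
  intros Hb.
  assert (H1 : is_lim_seq (fun n => ln (INR n)) p_infty).
  { apply (is_lim_comp_seq ln INR p_infty p_infty is_lim_ln_p);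
      [exists O; intros; discriminate | apply is_lim_seq_INR]. }
  pose proof (is_lim_seq_scal_l _ (- b) _ H1) as H2.
  assert (E : Rbar_mult (- b) p_infty = m_infty)
    by (simpl; destruct (Rle_dec 0 (- b)); [exfalso; lra | reflexivity]).
  rewrite E in H2.
  apply (is_lim_comp_seq exp _ m_infty 0 is_lim_exp_m) in H2; [exact H2 | exists O; intros; discriminate].
Qed.

Lemma Csum_n_telescope (g : nat -> C) (w : C) M :
  Csum_n (fun j => Cminus (g j) (Cmult w (g (S j)))) M =
  Cplus (Cmult (Cminus (RtoC 1) w) (Csum_n g M)) (Cminus (Cmult w (g O)) (Cmult w (g (S M)))).
Proof. induction M as [|M IH]; cbn [Csum_n]; [|rewrite IH]; ring. Qed.

(* For w = 1 the value of [CSeries g] is arbitrary, but it is multiplied by 0. *)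
Lemma telescoping_CSeries (g : nat -> C) (w l : C) :
  is_Clim g (RtoC 0) -> is_Cseries (fun j => Cminus (g j) (Cmult w (g (S j)))) l ->
  l = Cplus (Cmult (Cminus (RtoC 1) w) (CSeries g)) (Cmult w (g O)).
Proof.
  intros [Hg1 Hg2] Hl. apply is_Cseries_Clim in Hl.
  assert (Hshift : is_Clim (fun M => g (S M)) (RtoC 0))
    by (split; apply (is_lim_seq_incr_1 (fun n => _ (g n))); auto).
  assert (HP : is_Clim (fun M => Cmult (Cminus (RtoC 1) w) (Csum_n g M)) (Cminus l (Cmult w (g O)))).
  { pose proof (is_Clim_plus _ _ _ _ Hl (is_Clim_plus _ _ _ _ (is_Clim_const (Copp (Cmult w (g O))))
                                          (is_Clim_scal w _ _ Hshift))) as H.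
    revert H; apply is_Clim_ext; [intros M; rewrite Csum_n_telescope | ]; ring. }
  destruct (Ceq_dec w (RtoC 1)) as [->|Hw].
  - assert (Z : is_Clim (fun M => Cmult (Cminus (RtoC 1) (RtoC 1)) (Csum_n g M)) (RtoC 0))
      by (apply (is_Clim_ext (fun _ => RtoC 0) _ (RtoC 0));
          [intros; ring | reflexivity | apply is_Clim_const]).
    pose proof (is_Clim_unique _ _ _ HP Z) as E.
    transitivity (Cplus (Cminus l (Cmult (RtoC 1) (g O))) (Cmult (RtoC 1) (g O))); [ring|].
    rewrite E. ring.
  - assert (Hnz : Cminus (RtoC 1) w <> RtoC 0) by (intro E; apply Hw, eq_sym, Ceq_minus; auto).
    apply (is_Clim_scal (Cinv (Cminus (RtoC 1) w))) in HP.
    assert (Hser : is_Cseries g (Cmult (Cinv (Cminus (RtoC 1) w)) (Cminus l (Cmult w (g O))))).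
    { apply is_Cseries_Clim. revert HP; apply is_Clim_ext; [|reflexivity].
      intros M. rewrite Cmult_assoc, Cinv_l by auto. ring. }
    rewrite (is_Cseries_CSeries _ _ Hser). field. auto.
Qed.

Lemma Li_term_mult w w' s s' n :
  Cmult (Li_term w s n) (Li_term w' s' n) = Li_term (Cmult w w') (Cplus s s') n.
Proof.
  unfold Li_term. rewrite !Cdiv_cpow_pos, Cpow_mult_l.
  replace (Copp (Cplus s s')) with (Cplus (Copp s) (Copp s')) by ring.
  rewrite cpow_pos_add. ring.
Qed.

Lemma is_Cseries_Li_term_diff z s n : z <> RtoC 0 -> (2 <= n)%nat ->
  is_Cseries (fun k => Cmult (binom_diff_coef s k) (Li_term z (Cplus s (RtoC (INR k))) n))
    (Cminus (Li_term z (Cminus s (RtoC 1)) n) (Cmult (Cinv z) (Li_term z (Cminus s (RtoC 1)) (S n)))).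
Proof.
  intros Hz Hn.
  pose proof (is_Cseries_scal (Cpow z n) _ _
                (is_Cseries_cpow_pos_diff s (INR n) ltac:(apply (lt_INR 1); lia))) as H.
  revert H; apply is_Cseries_ext.
  - intros k. unfold Li_term, Cdiv. ring.
  - unfold Li_term. rewrite !Cdiv_cpow_pos, S_INR.
    replace (Copp (Cminus s (RtoC 1))) with (Cminus (RtoC 1) s) by ring.
    cbn [Cpow]. field. auto.
Qed.

Lemma is_Clim_Li_term w s m : Cmod w <= 1 -> 0 < Re s -> is_Clim (fun j => Li_term w s (m + j)) (RtoC 0).
Proof.
  intros Hw Hs. apply (is_Clim_le_bound _ _ (fun j => Rpower (INR (m + j)) (- Re s))).
  - intros j. replace (Cminus (Li_term w s (m + j)) (RtoC 0)) with (Li_term w s (m + j)) by ring.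
    apply Cmod_Li_term_le; auto.
  - apply (is_lim_seq_ext (fun j => Rpower (INR (j + m)) (- Re s)));
      [intros; rewrite Nat.add_comm; reflexivity|].
    apply (is_lim_seq_incr_n (fun n => Rpower (INR n) (- Re s))), is_lim_seq_Rpower_opp; auto.
Qed.

Lemma Li_tail_binom_identity z s m : Cmod z <= 1 -> z <> RtoC 0 -> 1 < Re s -> (2 <= m)%nat ->
  is_Cseries (fun k => Cmult (binom_diff_coef s k) (Li_tail z (Cplus s (RtoC (INR k))) m))
    (Cplus (Cmult (Cminus (RtoC 1) (Cinv z)) (Li_tail z (Cminus s (RtoC 1)) m))
           (Cmult (Cinv z) (Li_term z (Cminus s (RtoC 1)) m))).
Proof.
  intros Hz Hz0 Hs Hm.
  set (A := fun k j => Cmult (binom_diff_coef s k) (Li_term z (Cplus s (RtoC (INR k))) (m + j))).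
  set (g := fun j => Li_term z (Cminus s (RtoC 1)) (m + j)).
  assert (HA : forall k j,
             Cmod (A k j) <= (Cmod (binom_diff_coef s k) * (/ 2) ^ k) * Rpower (INR (m + j)) (- Re s)).
  { intros k j. unfold A. rewrite Cmod_mult, Rmult_assoc.
    apply Rmult_le_compat_l; [apply Cmod_ge_0|].
    eapply Rle_trans; [apply Cmod_Li_term_le; auto|].
    apply Rpower_opp_plus_INR_le, (le_INR 2); lia. }
  assert (Rows : forall k,
             is_Cseries (A k) (Cmult (binom_diff_coef s k) (Li_tail z (Cplus s (RtoC (INR k))) m))).
  { intros k. apply is_Cseries_scal, is_Cseries_Li_tail; auto; [|lia].
    change (1 < Re s + INR k). pose proof (pos_INR k). lra. }
  assert (Cols : forall j, is_Cseries (fun k => A k j) (Cminus (g j) (Cmult (Cinv z) (g (S j))))).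
  { intros j. unfold g. rewrite Nat.add_succ_r. apply is_Cseries_Li_term_diff; auto. lia. }
  destruct (is_Cseries_fubini A _ _ _ _ (ex_series_binom_diff_coef s)
              (proj1 (Rpower_tail_series (Re s) m Hs ltac:(lia))) HA Rows Cols) as [l [Hrow Hcol]].
  assert (Hg : is_Clim g (RtoC 0)) by (apply is_Clim_Li_term; auto; unfold Re in *; simpl; lra).
  rewrite (telescoping_CSeries g (Cinv z) l Hg Hcol) in Hrow.
  unfold g in Hrow. rewrite <- Li_tail_CSeries, Nat.add_0_r in Hrow. exact Hrow.
Qed.

(** * Nested sums *)

Fixpoint nested_sum (L : list (C * C)) (f : nat -> C) (m : nat) : C :=
  match L with
  | [] => f m
  | (w, s) :: rest => CSeries (fun j => Cmult (Li_term w s (m + j)) (nested_sum rest f (m + j)))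
  end.

Lemma nested_tail_nested_sum L m : nested_tail L m = nested_sum L (fun _ => RtoC 1) m.
Proof.
  revert m; induction L as [|[w s] rest IH]; intros m; simpl; auto.
  apply CSeries_ext; intros j. rewrite IH. reflexivity.
Qed.

Lemma nested_sum_app L1 L2 f m : nested_sum (L1 ++ L2) f m = nested_sum L1 (nested_sum L2 f) m.
Proof.
  revert m; induction L1 as [|[w s] rest IH]; intros m; simpl; auto.
  apply CSeries_ext; intros j. rewrite IH. reflexivity.
Qed.

Lemma nested_sum_ext L f f' m : (forall n, (m <= n)%nat -> f n = f' n) ->
  nested_sum L f m = nested_sum L f' m.
Proof.
  revert m; induction L as [|[w s] rest IH]; intros m E; simpl; [apply E; lia|].
  apply CSeries_ext; intros j. rewrite (IH (m + j)%nat); auto. intros; apply E; lia.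
Qed.

(* If f n = O(n^(-b)), then nested_sum L f m = O(m^(-nested_decay L b)), see
   [Cmod_nested_sum_le]; [admissible L b] says that every layer then sums terms that are
   O(n^(-sigma)) with sigma > 1. *)
Fixpoint nested_decay (L : list (C * C)) (b : R) : R :=
  match L with [] => b | (w, s) :: rest => nested_decay rest b + Re s - 1 end.

Fixpoint admissible (L : list (C * C)) (b : R) : Prop :=
  match L with
  | [] => True
  | (w, s) :: rest => admissible rest b /\ 1 < nested_decay rest b + Re s /\ Cmod w <= 1
  end.

Fixpoint nested_const (L : list (C * C)) (b : R) : R :=
  match L with
  | [] => 1
  | (w, s) :: rest => 2 * nested_const rest b * zeta_tail_const (nested_decay rest b + Re s)
  end.

Lemma nested_const_ge0 L b : admissible L b -> 0 <= nested_const L b.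
Proof.
  induction L as [|[w s] rest IH]; simpl; [lra|]. intros [Hr [Hg _]].
  apply Rmult_le_pos; [specialize (IH Hr); lra | apply zeta_tail_const_ge0; auto].
Qed.

(* Linearity of nested sums is deduced from the interchange lemma applied to the two-term
   series [Cpair]. *)
Definition Cpair (x y : C) (k : nat) : C := match k with O => x | 1%nat => y | _ => RtoC 0 end.

Definition Rpair (x y : R) (k : nat) : R := match k with O => x | 1%nat => y | _ => 0 end.

Lemma is_Cseries_Cpair x y : is_Cseries (Cpair x y) (Cplus x y).
Proof.
  assert (H0 : is_Cseries (fun k => Cpair x y (S (S k))) (RtoC 0)) by (apply is_Cseries_0; reflexivity).
  apply (is_Cseries_decr_1 (fun k => Cpair x y (S k))), (is_Cseries_decr_1 (Cpair x y)) in H0.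
  revert H0; apply is_Cseries_ext; [reflexivity | simpl; ring].
Qed.

Lemma ex_series_Rpair x y : ex_series (Rpair x y).
Proof.
  assert (H0 : is_series (fun k => Rpair x y (S (S k))) 0)
    by (eapply is_series_ext; [|apply is_series_0]; reflexivity).
  apply (is_series_decr_1_R (fun k => Rpair x y (S k))), (is_series_decr_1_R (Rpair x y)) in H0.
  eexists; exact H0.
Qed.

Section NestedSums.

Variables (N : nat) (b : R).
Hypothesis N_ge1 : (1 <= N)%nat.

Lemma Cmod_nested_sum_le L f A : admissible L b -> 0 <= A ->
  (forall n, (N <= n)%nat -> Cmod (f n) <= A * Rpower (INR n) (- b)) ->
  forall m, (N <= m)%nat ->
  Cmod (nested_sum L f m) <= A * nested_const L b * Rpower (INR m) (- nested_decay L b).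
Proof.
  intros HL HA Hf. induction L as [|[w s] rest IH]; intros m Hm; simpl; [rewrite Rmult_1_r; auto|].
  destruct HL as [Hr [Hg Hw]].
  set (g := nested_decay rest b + Re s) in *.
  pose proof (nested_const_ge0 _ _ Hr) as HK.
  destruct (CSeries_tail_dominated (fun j => Cmult (Li_term w s (m + j)) (nested_sum rest f (m + j)))
              m (A * nested_const rest b) g) as [_ Hb].
  - exact Hg.
  - lia.
  - apply Rmult_le_pos; auto.
  - intros j. unfold g. rewrite Cmod_mult, Ropp_plus_distr, Rpower_plus.
    set (x := INR (m + j)).
    replace (A * nested_const rest b * (Rpower x (- nested_decay rest b) * Rpower x (- Re s)))
      with (Rpower x (- Re s) * (A * nested_const rest b * Rpower x (- nested_decay rest b))) by ring.
    apply Rmult_le_compat; try apply Cmod_ge_0; [apply Cmod_Li_term_le; auto | apply IH; auto; lia].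
  - replace (- (g - 1)) with (1 - g) by ring.
    eapply Rle_trans; [exact Hb | right; ring].
Qed.

Lemma Cmod_scal_nested_sum_le L c f A : admissible L b -> 0 <= A ->
  (forall n, (N <= n)%nat -> Cmod c * Cmod (f n) <= A * Rpower (INR n) (- b)) ->
  forall m, (N <= m)%nat ->
  Cmod c * Cmod (nested_sum L f m) <= A * nested_const L b * Rpower (INR m) (- nested_decay L b).
Proof.
  intros HL HA Hf m Hm. pose proof (nested_const_ge0 _ _ HL) as HK.
  destruct (Ceq_dec c (RtoC 0)) as [->|Hc].
  - rewrite Cmod_0, Rmult_0_l. apply Rmult_le_pos; [apply Rmult_le_pos; auto | left; apply Rpower_pos].
  - apply Cmod_gt_0 in Hc.
    assert (Hf' : forall n, (N <= n)%nat -> Cmod (f n) <= A / Cmod c * Rpower (INR n) (- b)).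
    { intros n Hn. apply (Rmult_le_reg_l (Cmod c)); auto.
      replace (Cmod c * (A / Cmod c * Rpower (INR n) (- b))) with (A * Rpower (INR n) (- b)) by (field; lra).
      auto. }
    pose proof (Cmod_nested_sum_le L f (A / Cmod c) HL ltac:(apply Rdiv_le_0_compat; lra) Hf' m Hm) as Hb.
    apply (Rmult_le_compat_l (Cmod c)) in Hb; [|lra].
    eapply Rle_trans; [exact Hb | right; field; lra].
Qed.

Lemma is_Cseries_nested_sum L d f g al : admissible L b ->
  ex_series al -> (forall k, 0 <= al k) ->
  (forall k n, (N <= n)%nat -> Cmod (d k) * Cmod (f k n) <= al k * Rpower (INR n) (- b)) ->
  (forall n, (N <= n)%nat -> is_Cseries (fun k => Cmult (d k) (f k n)) (g n)) ->
  forall m, (N <= m)%nat ->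
  is_Cseries (fun k => Cmult (d k) (nested_sum L (f k) m)) (nested_sum L g m).
Proof.
  intros HL Eal Hal Hf Hg. induction L as [|[w s] rest IH]; intros m Hm; simpl; [auto|].
  destruct HL as [Hr [Hgam Hw]].
  set (gam := nested_decay rest b + Re s) in *.
  set (K := nested_const rest b).
  set (be := fun j => K * Rpower (INR (m + j)) (- gam)).
  set (A := fun k j => Cmult (d k) (Cmult (Li_term w s (m + j)) (nested_sum rest (f k) (m + j)))).
  assert (HA : forall k j, Cmod (A k j) <= al k * be j).
  { intros k j. unfold A, be, gam. rewrite !Cmod_mult, Ropp_plus_distr, Rpower_plus.
    pose proof (Cmod_scal_nested_sum_le rest (d k) (f k) (al k) Hr (Hal k) (Hf k) (m + j) ltac:(lia)).
    replace (Cmod (d k) * (Cmod (Li_term w s (m + j)) * Cmod (nested_sum rest (f k) (m + j))))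
      with (Cmod (Li_term w s (m + j)) * (Cmod (d k) * Cmod (nested_sum rest (f k) (m + j)))) by ring.
    replace (al k * (K * (Rpower (INR (m + j)) (- nested_decay rest b) * Rpower (INR (m + j)) (- Re s))))
      with (Rpower (INR (m + j)) (- Re s) * (al k * K * Rpower (INR (m + j)) (- nested_decay rest b))) by ring.
    apply Rmult_le_compat; try apply Cmod_ge_0;
      [apply Rmult_le_pos; apply Cmod_ge_0 | apply Cmod_Li_term_le; auto | auto]. }
  assert (Ebe : ex_series be)
    by apply (ex_series_scal_l _ _ (proj1 (Rpower_tail_series gam m Hgam ltac:(lia)))).
  assert (Rows : forall k, is_Cseries (A k) (Cmult (d k) (nested_sum ((w, s) :: rest) (f k) m))).
  { intros k. destruct (Ceq_dec (d k) (RtoC 0)) as [D0|D0].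
    - apply (is_Cseries_ext (fun _ => RtoC 0) _ (RtoC 0));
        [intros j; unfold A; rewrite D0; ring | rewrite D0; ring |].
      apply is_Cseries_0; auto.
    - apply is_Cseries_scal, (is_Cseries_dominated _ (fun j => al k / Cmod (d k) * be j)).
      + intros j. apply Cmod_gt_0 in D0. apply (Rmult_le_reg_l (Cmod (d k))); auto.
        rewrite <- Cmod_mult.
        replace (Cmod (d k) * (al k / Cmod (d k) * be j)) with (al k * be j) by (field; lra).
        apply HA.
      + apply (ex_series_scal_l _ _ Ebe). }
  assert (Cols : forall j,
             is_Cseries (fun k => A k j) (Cmult (Li_term w s (m + j)) (nested_sum rest g (m + j)))).
  { intros j. pose proof (is_Cseries_scal (Li_term w s (m + j)) _ _ (IH Hr (m + j)%nat ltac:(lia))) as Hc.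
    revert Hc; apply is_Cseries_ext; [intros k; unfold A; ring | reflexivity]. }
  destruct (is_Cseries_fubini A al be _ _ Eal Ebe HA Rows Cols) as [l [Hrow Hcol]].
  rewrite (is_Cseries_CSeries _ _ Hcol). exact Hrow.
Qed.

Lemma nested_sum_linear L a1 a2 f1 f2 A1 A2 : admissible L b -> 0 <= A1 -> 0 <= A2 ->
  (forall n, (N <= n)%nat -> Cmod a1 * Cmod (f1 n) <= A1 * Rpower (INR n) (- b)) ->
  (forall n, (N <= n)%nat -> Cmod a2 * Cmod (f2 n) <= A2 * Rpower (INR n) (- b)) ->
  forall m, (N <= m)%nat ->
  nested_sum L (fun n => Cplus (Cmult a1 (f1 n)) (Cmult a2 (f2 n))) m =
  Cplus (Cmult a1 (nested_sum L f1 m)) (Cmult a2 (nested_sum L f2 m)).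
Proof.
  intros HL HA1 HA2 H1 H2 m Hm.
  set (F := fun k : nat => match k with O => f1 | _ => f2 end).
  apply (is_Cseries_unique (fun k => Cmult (Cpair a1 a2 k) (nested_sum L (F k) m))).
  - apply (is_Cseries_nested_sum L (Cpair a1 a2) F _ (Rpair A1 A2)); auto.
    + apply ex_series_Rpair.
    + intros [|[|k]]; simpl; auto; lra.
    + intros [|[|k]] n Hn; simpl; auto. rewrite Cmod_0. lra.
    + intros n Hn.
      apply (is_Cseries_ext (Cpair (Cmult a1 (f1 n)) (Cmult a2 (f2 n))) _
                            (Cplus (Cmult a1 (f1 n)) (Cmult a2 (f2 n))));
        [|reflexivity|apply is_Cseries_Cpair].
      intros [|[|k]]; simpl; ring.
  - apply (is_Cseries_ext (Cpair (Cmult a1 (nested_sum L f1 m)) (Cmult a2 (nested_sum L f2 m))) _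
                           (Cplus (Cmult a1 (nested_sum L f1 m)) (Cmult a2 (nested_sum L f2 m))));
      [|reflexivity|apply is_Cseries_Cpair].
    intros [|[|k]]; simpl; ring.
Qed.

End NestedSums.

Definition shift_weight (s : C) (k : nat) : R :=
  Cmod (binom_diff_coef s k) * (/ 2) ^ k * (2 * zeta_tail_const (Re s)).

Lemma shift_weight_ge0 s k : 1 < Re s -> 0 <= shift_weight s k.
Proof.
  intros Hs. unfold shift_weight. pose proof (zeta_tail_const_ge0 _ Hs).
  pose proof (pow_le (/ 2) k ltac:(lra)). pose proof (Cmod_ge_0 (binom_diff_coef s k)).
  apply Rmult_le_pos; apply Rmult_le_pos; lra.
Qed.

Lemma ex_series_shift_weight s : ex_series (shift_weight s).
Proof. apply (ex_series_scal_r _ _ (ex_series_binom_diff_coef s)). Qed.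

Lemma Cmod_binom_diff_coef_Li_tail_le z s k n : Cmod z <= 1 -> 1 < Re s -> (2 <= n)%nat ->
  Cmod (binom_diff_coef s k) * Cmod (Li_tail z (Cplus s (RtoC (INR k))) n)
  <= shift_weight s k * Rpower (INR n) (- (Re s - 1)).
Proof.
  intros Hz Hs Hn. replace (- (Re s - 1)) with (1 - Re s) by ring. unfold shift_weight.
  eapply Rle_trans; [apply Rmult_le_compat_l; [apply Cmod_ge_0 | apply Cmod_Li_tail_shift_le; auto]|].
  right; ring.
Qed.

Lemma nested_sum_binom_identity L z s N : (2 <= N)%nat -> Cmod z <= 1 -> z <> RtoC 0 -> 1 < Re s ->
  admissible L (Re s - 1) ->
  CSeries (fun k => Cmult (binom_diff_coef s k) (nested_sum L (Li_tail z (Cplus s (RtoC (INR k)))) N)) =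
  Cplus (Cmult (Cminus (RtoC 1) (Cinv z)) (nested_sum L (Li_tail z (Cminus s (RtoC 1))) N))
        (Cmult (Cinv z) (nested_sum L (Li_term z (Cminus s (RtoC 1))) N)).
Proof.
  intros HN Hz Hz0 Hs HL.
  set (al := shift_weight s).
  set (G := fun n => Cplus (Cmult (Cminus (RtoC 1) (Cinv z)) (Li_tail z (Cminus s (RtoC 1)) n))
                           (Cmult (Cinv z) (Li_term z (Cminus s (RtoC 1)) n))).
  assert (Hdom : forall k n, (N <= n)%nat ->
            Cmod (binom_diff_coef s k) * Cmod (Li_tail z (Cplus s (RtoC (INR k))) n)
            <= al k * Rpower (INR n) (- (Re s - 1)))
    by (intros; apply Cmod_binom_diff_coef_Li_tail_le; auto; lia).
  assert (Hid : forall n, (N <= n)%nat ->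
            is_Cseries (fun k => Cmult (binom_diff_coef s k) (Li_tail z (Cplus s (RtoC (INR k))) n)) (G n))
    by (intros; apply Li_tail_binom_identity; auto; lia).
  rewrite (is_Cseries_CSeries _ _ (is_Cseries_nested_sum N _ ltac:(lia) L _
             (fun k => Li_tail z (Cplus s (RtoC (INR k)))) G al HL (ex_series_shift_weight s)
             (fun k => shift_weight_ge0 s k Hs) Hdom Hid N (le_n N))).
  assert (HG : forall n, (N <= n)%nat -> Cmod (G n) <= 2 * Series al * Rpower (INR n) (- (Re s - 1))).
  { intros n Hn. rewrite Rmult_assoc, <- Series_scal_r.
    apply (Cmod_is_Cseries_le _ _ _ (Hid n Hn)); [intros k; rewrite Cmod_mult; apply Hdom; auto|].
    apply (ex_series_scal_r _ _ (ex_series_shift_weight s)). }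
  assert (Hterm : forall n, Cmod (Cinv z) * Cmod (Li_term z (Cminus s (RtoC 1)) n)
                            <= / Cmod z * Rpower (INR n) (- (Re s - 1))).
  { intros n. rewrite Cmod_inv by auto. apply Rmult_le_compat_l.
    - left; apply Rinv_0_lt_compat, Cmod_gt_0; auto.
    - replace (Re s - 1) with (Re (Cminus s (RtoC 1))) by (unfold Re; simpl; ring).
      apply Cmod_Li_term_le; auto. }
  assert (Hseries_ge0 : 0 <= Series al).
  { rewrite <- (is_series_unique _ _ is_series_0) at 1.
    apply Series_le; [intros; split; [lra | apply shift_weight_ge0; auto] | apply ex_series_shift_weight]. }
  assert (Hzinv : 0 <= / Cmod z) by (left; apply Rinv_0_lt_compat, Cmod_gt_0; auto).
  apply (nested_sum_linear N (Re s - 1) ltac:(lia) L _ _ _ _ (2 * Series al + / Cmod z) (/ Cmod z));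
    auto; try lra.
  (* [Li_tail z (s - 1)] itself may diverge (z = 1, Re s <= 2): bound its product with
     1 - 1/z through the identity instead. *)
  intros n Hn. rewrite <- Cmod_mult.
  replace (Cmult (Cminus (RtoC 1) (Cinv z)) (Li_tail z (Cminus s (RtoC 1)) n))
    with (Cminus (G n) (Cmult (Cinv z) (Li_term z (Cminus s (RtoC 1)) n))) by (unfold G; ring).
  eapply Rle_trans; [apply Cmod_triangle|]. rewrite Cmod_opp, Cmod_mult.
  specialize (HG n Hn). specialize (Hterm n). lra.
Qed.

Lemma nested_sum_merge L w1 w2 s1 s2 N :
  nested_sum (L ++ [(w2, s2)]) (Li_term w1 (Cminus s1 (RtoC 1))) N =
  nested_sum L (Li_tail (Cmult w1 w2) (Cminus (Cplus s1 s2) (RtoC 1))) N.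
Proof.
  rewrite nested_sum_app. apply nested_sum_ext. intros n _. simpl.
  apply CSeries_ext. intros j. rewrite Li_term_mult, Cmult_comm.
  replace (Cplus s2 (Cminus s1 (RtoC 1))) with (Cminus (Cplus s1 s2) (RtoC 1)) by ring.
  unfold Li_term. ring.
Qed.

(* Listed from the outermost summation inwards, as [nested_tail] expects. *)
Definition layers (z s : nat -> C) (a c : nat) : list (C * C) :=
  rev (combine (map z (seq a c)) (map s (seq a c))).

Lemma layers_S z s a c : layers z s a (S c) = layers z s (S a) c ++ [(z a, s a)].
Proof. reflexivity. Qed.

Lemma LiStar_tail_nested_sum (z s : nat -> C) w x a c N :
  LiStar_tail (w :: map z (seq a c)) (x :: map s (seq a c)) N = nested_sum (layers z s a c) (Li_tail w x) N.
Proof.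
  unfold LiStar_tail.
  change (nested_tail (layers z s a c ++ [(w, x)]) N = nested_sum (layers z s a c) (Li_tail w x) N).
  rewrite nested_tail_nested_sum, nested_sum_app. apply nested_sum_ext. intros n _.
  unfold Li_tail. rewrite nested_tail_nested_sum. reflexivity.
Qed.

Lemma nested_decay_app L1 L2 b : nested_decay (L1 ++ L2) b = nested_decay L1 (nested_decay L2 b).
Proof. induction L1 as [|[w s] rest IH]; simpl; auto. rewrite IH; auto. Qed.

Lemma admissible_app L1 L2 b :
  admissible L2 b -> admissible L1 (nested_decay L2 b) -> admissible (L1 ++ L2) b.
Proof.
  induction L1 as [|[w s] rest IH]; simpl; auto. intros H2 [H1 [H3 H4]].
  rewrite nested_decay_app. auto.
Qed.

Lemma Csum_list_app l1 l2 f : Csum_list (l1 ++ l2) f = Cplus (Csum_list l1 f) (Csum_list l2 f).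
Proof. induction l1 as [|i l1 IH]; simpl; [ring | rewrite IH; ring]. Qed.

Lemma admissible_layers z s c : forall a b,
  (forall i, (a <= i < a + c)%nat -> Cmod (z i) <= 1) ->
  (forall i, (a <= i < a + c)%nat -> INR (S (i - a)) < b + Re (Csum_list (seq a (S (i - a))) s)) ->
  admissible (layers z s a c) b.
Proof.
  induction c as [|c IH]; intros a b Hz Hs; [exact I|].
  rewrite layers_S. apply admissible_app.
  - specialize (Hs a ltac:(lia)). rewrite Nat.sub_diag in Hs.
    change (INR 1 < b + (Re (s a) + 0)) in Hs.
    cbn [admissible nested_decay]. split; [exact I | split; [simpl in Hs; lra | apply Hz; lia]].
  - apply IH; [intros; apply Hz; lia|].
    intros i Hi. specialize (Hs i ltac:(lia)).
    replace (i - a)%nat with (S (i - S a)) in Hs by lia.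
    change (Csum_list (seq a (S (S (i - S a)))) s)
      with (Cplus (s a) (Csum_list (seq (S a) (S (i - S a))) s)) in Hs.
    change (Re (Cplus ?x ?y)) with (Re x + Re y) in Hs.
    rewrite S_INR in Hs. cbn [nested_decay]. lra.
Qed.

Lemma admissible_layers_in_U r z s p : in_U r s ->
  (forall i, (1 <= i <= r)%nat -> Cmod (z i) <= 1) -> (1 <= p <= r)%nat ->
  admissible (layers z s (S p) (r - p)) (Re (Csum_list (seq 1 p) s) - INR p).
Proof.
  intros HU Hz Hp. apply admissible_layers; [intros; apply Hz; lia|].
  intros i Hi. specialize (HU i ltac:(lia)).
  replace i with (p + S (i - S p))%nat in HU at 1 by lia.
  rewrite seq_app, Csum_list_app in HU. replace (1 + p)%nat with (S p) in HU by lia.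
  replace (INR i) with (INR p + INR (S (i - S p))) in HU
    by (rewrite <- plus_INR; f_equal; lia).
  change (Re (Cplus ?x ?y)) with (Re x + Re y) in HU. lra.
Qed.
Theorem proposition1 (N r : nat) (z s : nat -> C) :
  (2 <= N)%nat -> (1 <= r)%nat ->
  (forall i : nat, (1 <= i <= r)%nat -> Cmod (z i) <= 1) ->
  z 1%nat <> RtoC 0 ->
  in_U r s ->
  (r = 1%nat ->
     Cplus (Cmult (Cminus (RtoC 1) (Cinv (z 1%nat)))
                  (LiStar_tail [z 1%nat] [Cminus (s 1%nat) (RtoC 1)] N))
           (Cdiv (Cpow (z 1%nat) (N - 1)) (cpow_pos (INR N) (Cminus (s 1%nat) (RtoC 1))))
     = CSeries (fun k =>
         Cmult (Cmult (Cpow (RtoC (-1)) k)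
                      (Cdiv (poch (Cminus (s 1%nat) (RtoC 1)) (S k)) (RtoC (INR (fact (S k))))))
               (LiStar_tail [z 1%nat] [Cplus (s 1%nat) (RtoC (INR k))] N))) /\
  ((1 < r)%nat ->
     Cplus (Cmult (Cminus (RtoC 1) (Cinv (z 1%nat)))
                  (LiStar_tail (map z (seq 1 r))
                               (Cminus (s 1%nat) (RtoC 1) :: map s (seq 2 (r - 1))) N))
           (Cmult (Cinv (z 1%nat))
                  (LiStar_tail (Cmult (z 1%nat) (z 2%nat) :: map z (seq 3 (r - 2)))
                               (Cminus (Cplus (s 1%nat) (s 2%nat)) (RtoC 1) :: map s (seq 3 (r - 2)))
                               N))
     = CSeries (fun k =>
         Cmult (Cmult (Cpow (RtoC (-1)) k)
                      (Cdiv (poch (Cminus (s 1%nat) (RtoC 1)) (S k)) (RtoC (INR (fact (S k))))))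
               (LiStar_tail (map z (seq 1 r))
                            (Cplus (s 1%nat) (RtoC (INR k)) :: map s (seq 2 (r - 1))) N))).
Proof.
  intros HN Hr Hz Hz1 HU.
  assert (Hs1 : 1 < Re (s 1%nat)).
  { specialize (HU 1%nat ltac:(lia)). change (Re (Cplus (s 1%nat) (RtoC 0)) > 1) in HU.
    unfold Re in *; simpl in HU. lra. }
  assert (Hz1' : Cmod (z 1%nat) <= 1) by (apply Hz; lia).
  split.
  - intros ->. symmetry.
    refine (eq_trans (nested_sum_binom_identity [] (z 1%nat) (s 1%nat) N HN Hz1' Hz1 Hs1 I) _).
    f_equal. destruct N as [|N']; [lia|]. unfold Li_term. cbn [nested_sum Cpow].
    replace (S N' - 1)%nat with N' by lia. field. split; [apply cpow_pos_neq_0 | auto].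
  - intros Hr2. destruct r as [|[|c]]; try lia.
    set (L := layers z s 2 (S c)).
    assert (HL : admissible L (Re (s 1%nat) - 1)).
    { pose proof (admissible_layers_in_U _ z s 1 HU Hz ltac:(lia)) as H.
      replace (Re (s 1%nat) - 1) with (Re (Csum_list (seq 1 1) s) - INR 1) by (unfold Re; simpl; ring).
      exact H. }
    assert (EA : forall x, LiStar_tail (map z (seq 1 (S (S c)))) (x :: map s (seq 2 (S (S c) - 1))) N =
                           nested_sum L (Li_tail (z 1%nat) x) N)
      by (intros; exact (LiStar_tail_nested_sum z s (z 1%nat) x 2 (S c) N)).
    rewrite EA, (CSeries_ext _ _ (fun k => f_equal _ (EA _))).
    replace (S (S c) - 2)%nat with c by lia.
    rewrite (LiStar_tail_nested_sum z s _ _ 3 c N), <- nested_sum_merge.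
    symmetry. exact (nested_sum_binom_identity L (z 1%nat) (s 1%nat) N HN Hz1' Hz1 Hs1 HL).
Qed.
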